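(* Let $D_+\to\mathcal E\xrightarrow{q}\mathcal C$ be a linear extension of a small category $\mathcal C$ by a natural system $D$, and let $(\mathcal C,S)$ be a quasi-schemoid. Assume that for every morphism $f$ of $\mathcal C$ the homomorphisms $f_*$ and $f^*$ are invertible, and that $D_{1_{s(f)}}\cong D_{1_{s(g)}}$ whenever $f,g$ lie in a common block $\sigma\in S$. Then $\mathcal E$ admits a unique quasi-schemoid structure $\widetilde S$ such that $q:(\mathcal E,\widetilde S)\to(\mathcal C,S)$ is a morphism of quasi-schemoids and the induced map $\widetilde S\to S$ (sending a block to the block containing its image) is injective; namely $\widetilde S=\{q^{-1}(\sigma)\}_{\sigma\in S}$.
   Context: Write $s(f),t(f)$ for source and target. A quasi-schemoid is a pair $(\mathcal C,S)$ with $\mathcal C$ a small category and $S$ a partition of $mor(\mathcal C)$ into nonempty blocks such that for all $\sigma,\tau,\mu\in S$ and $f,g\in\mu$ the sets $\{(a,b)\in\sigma\times\tau: s(a)=t(b), a\circ b=f\}$ and the analogous set for $g$ have equal cardinality. A morphism of quasi-schemoids is a functor mapping each block into some block. The category of factorizations $F(\mathcal C)$ has objects the morphisms of $\mathcal C$ and morphisms $f\to g$ the pairs $(\alpha,\beta)$ with $g=\alpha f\beta$, composition $(\alpha',\beta')(\alpha,\beta)=(\alpha'\alpha,\beta\beta')$. A natural system is a functor $D:F(\mathcal C)\to\mathbb K\text{-Mod}$, $f\mapsto D_f$; for composable $f,g$ put $f_*=D(f,1):D_g\to D_{fg}$ and $g^*=D(1,g):D_f\to D_{fg}$. A linear extension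 $D_+\to\mathcal E\xrightarrow{q}\mathcal C$ (Baues–Wirsching) consists of a category $\mathcal E$ with the same objects and a full functor $q$ that is the identity on objects, such that for each morphism $f$ of $\mathcal C$ the abelian group $D_f$ acts transitively and freely on $q^{-1}(f)$ (written $f_0+\alpha$), and $(f_0+\alpha)(g_0+\beta)=f_0g_0+f_*\beta+g^*\alpha$. *)

From HB Require Import structures.
From mathcomp Require Import all_boot all_algebra.
Set Implicit Arguments. Unset Strict Implicit. Unset Printing Implicit Defensive.
Import GRing.Theory.
Local Open Scope ring_scope.

Record Cat (O : Type) := MkCat {
  CHom : O -> O -> Type;
  cid : forall x, CHom x x;
  ccomp : forall x y z, CHom y z -> CHom x y -> CHom x z;
  comp_idl : forall x y (f : CHom x y), ccomp (cid y) f = f;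
  comp_idr : forall x y (f : CHom x y), ccomp f (cid x) = f;
  compA : forall w x y z (h : CHom y z) (g : CHom x y) (f : CHom w x),
      ccomp h (ccomp g f) = ccomp (ccomp h g) f }.
Arguments CHom {O} c _ _ : rename.
Arguments cid {O} c x : rename.
Arguments ccomp {O} c {x y z} : rename.

Record Mor O (C : Cat O) := mkMor { msrc : O; mtgt : O; mhom : CHom C msrc mtgt }.
Arguments mkMor {O C msrc mtgt}.

Record CompPair O (C : Cat O) := mkCP {
  cp_x : O; cp_y : O; cp_z : O; cp_a : CHom C cp_y cp_z; cp_b : CHom C cp_x cp_y }.

Definition card_eq (A B : Type) : Prop := exists f : A -> B, bijective f.

Definition is_partition (X : Type) (S : (X -> Prop) -> Prop) : Prop :=
  (forall s, S s -> exists x, s x) /\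
  (forall x, exists s, S s /\ s x) /\
  (forall s t x, S s -> S t -> s x -> t x -> s = t).

Definition fact_set O (C : Cat O) (s t : Mor C -> Prop) (f : Mor C) : Type :=
  { p : CompPair C | s (mkMor (cp_a p)) /\ t (mkMor (cp_b p)) /\
                     mkMor (ccomp C (cp_a p) (cp_b p)) = f }.

Definition quasi_schemoid O (C : Cat O) (S : (Mor C -> Prop) -> Prop) : Prop :=
  is_partition S /\
  forall s t m f g, S s -> S t -> S m -> m f -> m g ->
    card_eq (fact_set s t f) (fact_set s t g).

Record Functor O1 O2 (C1 : Cat O1) (C2 : Cat O2) := {
  fobj : O1 -> O2;
  fmor : forall x y, CHom C1 x y -> CHom C2 (fobj x) (fobj y);
  fmor_id : forall x, fmor (cid C1 x) = cid C2 (fobj x);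
  fmor_comp : forall x y z (f : CHom C1 y z) (g : CHom C1 x y),
      fmor (ccomp C1 f g) = ccomp C2 (fmor f) (fmor g) }.
Arguments fmor {O1 O2 C1 C2} f {x y} : rename.

Definition fmorM O1 O2 (C1 : Cat O1) (C2 : Cat O2) (F : Functor C1 C2)
  (m : Mor C1) : Mor C2 := mkMor (fmor F (mhom m)).

Definition qs_morphism O1 O2 (C1 : Cat O1) (C2 : Cat O2) (F : Functor C1 C2)
  (S1 : (Mor C1 -> Prop) -> Prop) (S2 : (Mor C2 -> Prop) -> Prop) : Prop :=
  forall s, S1 s -> exists t, S2 t /\ forall m, s m -> t (fmorM F m).

(** The induced map S1 -> S2 (block |-> block containing its image) is injective. *)
Definition induced_injective O1 O2 (C1 : Cat O1) (C2 : Cat O2) (F : Functor C1 C2)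
  (S1 : (Mor C1 -> Prop) -> Prop) (S2 : (Mor C2 -> Prop) -> Prop) : Prop :=
  forall s1 s2 t, S1 s1 -> S1 s2 -> S2 t ->
    (forall m, s1 m -> t (fmorM F m)) -> (forall m, s2 m -> t (fmorM F m)) -> s1 = s2.

Definition transp (T : Type) (P : T -> Type) (a b : T) (e : a = b) (v : P a) : P b :=
  eq_rect a P v b e.
Arguments transp {T} P {a b} e v.

(** Natural systems D : F(C) -> K-Mod.  A morphism f -> a o f o b of F(C)
    is the pair (a, b); ns_map a f b = D(a, b). *)
Record NatSys (K : comPzRingType) O (C : Cat O) := {
  ns_D : forall x y, CHom C x y -> lmodType K;
  ns_map : forall w x y z (a : CHom C y z) (f : CHom C x y) (b : CHom C w x),
      {linear ns_D f -> ns_D (ccomp C a (ccomp C f b))};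
  ns_id : forall x y (f : CHom C x y)
      (e : ccomp C (cid C y) (ccomp C f (cid C x)) = f) (v : ns_D f),
      transp (fun h => (ns_D h : Type)) e (ns_map (cid C y) f (cid C x) v) = v;
  ns_comp : forall w' w x y z z' (a' : CHom C z z') (a : CHom C y z) (f : CHom C x y)
      (b : CHom C w x) (b' : CHom C w' w)
      (e : ccomp C (ccomp C a' a) (ccomp C f (ccomp C b b'))
           = ccomp C a' (ccomp C (ccomp C a (ccomp C f b)) b'))
      (v : ns_D f),
      transp (fun h => (ns_D h : Type)) e (ns_map (ccomp C a' a) f (ccomp C b b') v)
      = ns_map a' (ccomp C a (ccomp C f b)) b' (ns_map a f b v) }.
Arguments ns_D {K O C} n {x y} : rename.
Arguments ns_map {K O C} n {w x y z} : rename.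

Definition fstar K O (C : Cat O) (D : NatSys K C) x y z (f : CHom C y z) (g : CHom C x y)
  (v : ns_D D g) : ns_D D (ccomp C f g) :=
  transp (fun h => (ns_D D h : Type)) (f_equal (ccomp C f) (comp_idr g))
     (ns_map D f g (cid C x) v).

Arguments fstar {K O C} D {x y z} f g v.

Definition gstar K O (C : Cat O) (D : NatSys K C) x y z (f : CHom C y z) (g : CHom C x y)
  (v : ns_D D f) : ns_D D (ccomp C f g) :=
  transp (fun h => (ns_D D h : Type)) (comp_idl (ccomp C f g))
     (ns_map D (cid C z) f g v).

Arguments gstar {K O C} D {x y z} f g v.

(** Linear extensions D_+ -> E -q-> C (Baues--Wirsching).
    le_act f a ft is "ft + a" for ft in q^{-1}(f), a in D_f. *)
Record LinExt (K : comPzRingType) O (C : Cat O) (D : NatSys K C) := {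
  le_E : Cat O;
  le_q : forall x y, CHom le_E x y -> CHom C x y;
  le_q_id : forall x, @le_q _ _ (cid le_E x) = cid C x;
  le_q_comp : forall x y z (f : CHom le_E y z) (g : CHom le_E x y),
      @le_q _ _ (ccomp le_E f g) = ccomp C (@le_q _ _ f) (@le_q _ _ g);
  le_full : forall x y (f : CHom C x y), exists ft, @le_q _ _ ft = f;
  le_act : forall x y (f : CHom C x y), ns_D D f -> CHom le_E x y -> CHom le_E x y;
  le_act_fib : forall x y (f : CHom C x y) a ft, @le_q _ _ ft = f -> @le_q _ _ (@le_act _ _ f a ft) = f;
  le_act0 : forall x y (f : CHom C x y) ft, @le_q _ _ ft = f -> @le_act _ _ f 0 ft = ft;
  le_actD : forall x y (f : CHom C x y) a b ft, @le_q _ _ ft = f ->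
      @le_act _ _ f (a + b) ft = @le_act _ _ f a (@le_act _ _ f b ft);
  le_free : forall x y (f : CHom C x y) a ft, @le_q _ _ ft = f -> @le_act _ _ f a ft = ft -> a = 0;
  le_transitive : forall x y (f : CHom C x y) ft gt, @le_q _ _ ft = f -> @le_q _ _ gt = f ->
      exists a, gt = @le_act _ _ f a ft;
  le_comp : forall x y z (f0 : CHom le_E y z) (g0 : CHom le_E x y)
      (a : ns_D D (@le_q _ _ f0)) (b : ns_D D (@le_q _ _ g0)),
      ccomp le_E (@le_act _ _ (@le_q _ _ f0) a f0) (@le_act _ _ (@le_q _ _ g0) b g0)
      = @le_act _ _ (ccomp C (@le_q _ _ f0) (@le_q _ _ g0))
               (fstar D (@le_q _ _ f0) (@le_q _ _ g0) b + gstar D (@le_q _ _ f0) (@le_q _ _ g0) a)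
               (ccomp le_E f0 g0) }.
Arguments le_E {K O C D} l : rename.
Arguments le_q {K O C D} l {x y} : rename.

Definition le_functor K O (C : Cat O) (D : NatSys K C) (L : LinExt D)
  : Functor (le_E L) C :=
  {| fobj := fun x => x; fmor := fun x y => @le_q K O C D L x y;
     fmor_id := @le_q_id K O C D L; fmor_comp := @le_q_comp K O C D L |}.

(** - Pullbacks along functors surjective on morphisms (here [q], which is full
      and bijective on objects) are partitions, [q] maps blocks to blocks with
      an injective induced map, and any other partition with these two
      properties coincides with the pullback.  This gives existence of the
      partition and the uniqueness clause.
    - Counting: [q] sends a factorization [ft = at bt] to [q ft = (q at)(q bt)].
      Since every [f_*] is invertible, the fibre of this map over [(a, b)] is in
      bijection with the fibre of [q] over [a], i.e. with the [D_a]-torsor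
      [q^{-1}(a)], and [D_a] is isomorphic to [D_{1_{s(a)}}] via [a_*].  So the
      lifted factorizations of [ft] are a disjoint union of copies of the
      [D_{1_{s(a)}}]; as these have constant size along a block, equal counts in
      [C] give equal counts in [E], which is the quasi-schemoid axiom. *)

From HB Require Import structures.
From mathcomp Require Import all_boot all_algebra.
From Stdlib Require Import Eqdep ProofIrrelevance ClassicalEpsilon FunctionalExtensionality PropExtensionality.
Set Implicit Arguments. Unset Strict Implicit. Unset Printing Implicit Defensive.
Import GRing.Theory.
Local Open Scope ring_scope.

Lemma sig_inj (A : Type) (P : A -> Prop) (u v : sig P) : proj1_sig u = proj1_sig v -> u = v.
Proof. by apply: eq_sig_hprop => x; apply: proof_irrelevance. Qed.

Lemma card_refl (A : Type) : card_eq A A.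
Proof. by exists id; exists id. Qed.

Lemma card_sym (A B : Type) : card_eq A B -> card_eq B A.
Proof. by case=> f [g fK gK]; exists g; exists f. Qed.

Lemma card_trans (A B C : Type) :
  card_eq A B -> card_eq B C -> card_eq A C.
Proof. by case=> f bf [g bg]; exists (g \o f); exact: bij_comp. Qed.

Lemma card_inj_surj (A B : Type) (f : A -> B) :
  injective f -> (forall b, exists a, f a = b) -> card_eq A B.
Proof.
move=> f_inj f_surj; exists f.
pose g b := proj1_sig (constructive_indefinite_description _ (f_surj b)).
have gK : cancel g f by move=> b; rewrite /g; case: constructive_indefinite_description.
by exists g => // a; apply: f_inj; rewrite gK.
Qed.

Lemma card_fibres (A A' B B' : Type) (pi : A -> B) (pi' : A' -> B') (h : B -> B') :
  bijective h -> (forall b, card_eq {a | pi a = b} {a' | pi' a' = h b}) -> card_eq A A'.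
Proof.
move=> h_bij fibre_eq.
pose G b := proj1_sig (constructive_indefinite_description _ (fibre_eq b)).
have G_bij b : bijective (G b)
  by rewrite /G; case: constructive_indefinite_description.
have G_irr b1 b2 a (p1 : pi a = b1) (p2 : pi a = b2) :
    proj1_sig (G b1 (exist _ a p1)) = proj1_sig (G b2 (exist _ a p2)).
  by subst b1 b2.
pose Psi a := proj1_sig (G (pi a) (exist _ a erefl)).
apply: (@card_inj_surj _ _ Psi).
- move=> a1 a2 eq_Psi.
  have e : pi a1 = pi a2.
    apply: (bij_inj h_bij).
    rewrite -(proj2_sig (G (pi a1) (exist _ a1 erefl))).
    rewrite -(proj2_sig (G (pi a2) (exist _ a2 erefl))); exact: (f_equal pi' eq_Psi).
  have : G (pi a1) (exist _ a1 erefl) = G (pi a1) (exist _ a2 (esym e)).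
    by apply: sig_inj; rewrite (G_irr _ (pi a2) a2 _ erefl); exact: eq_Psi.
  by move/(bij_inj (G_bij _))/(f_equal (@proj1_sig _ _)).
- move=> a'; case: h_bij => hinv hK Kh.
  have pb : pi' a' = h (hinv (pi' a')) by rewrite Kh.
  case: (G_bij (hinv (pi' a'))) => ginv gK Kg.
  case E : (ginv (exist _ a' pb)) => [a p].
  by exists a; rewrite /Psi (G_irr _ _ a _ p) -E Kg.
Qed.

Lemma mkMor_endpoints O (C : Cat O) x y x' y' (f : CHom C x y) (g : CHom C x' y') :
  mkMor f = mkMor g -> x = x' /\ y = y'.
Proof. by case. Qed.

Lemma mkMor_inj O (C : Cat O) x y (f g : CHom C x y) : mkMor f = mkMor g -> f = g.
Proof. by case=> e; exact: (inj_pair2 _ _ _ _ _ (inj_pair2 _ _ _ _ _ e)). Qed.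

Definition preimage O1 O2 (C1 : Cat O1) (C2 : Cat O2) (F : Functor C1 C2)
  (s : Mor C2 -> Prop) : Mor C1 -> Prop :=
  fun m => s (fmorM F m).

Definition pullback O1 O2 (C1 : Cat O1) (C2 : Cat O2) (F : Functor C1 C2)
  (S : (Mor C2 -> Prop) -> Prop) : (Mor C1 -> Prop) -> Prop :=
  fun P => exists s, S s /\ P = preimage F s.

Lemma pullback_qs_morphism O1 O2 (C1 : Cat O1) (C2 : Cat O2) (F : Functor C1 C2)
  (S : (Mor C2 -> Prop) -> Prop) : qs_morphism F (pullback F S) S.
Proof. by move=> P [s [Ss ->]]; exists s. Qed.

Section PullbackAlongSurjection.

Variables (O1 O2 : Type) (C1 : Cat O1) (C2 : Cat O2) (F : Functor C1 C2).

Hypothesis F_surj : forall u, exists m, fmorM F m = u.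

Variable S : (Mor C2 -> Prop) -> Prop.
Hypothesis S_part : is_partition S.

(** Two blocks of [S] coincide as soon as [F] maps the preimage of the first
    into the second: the preimage is nonempty and blocks are disjoint. *)
Lemma block_of_image (s t : Mor C2 -> Prop) :
  S s -> S t -> (forall m, s (fmorM F m) -> t (fmorM F m)) -> s = t.
Proof.
case: S_part => S_ne [_ S_disj] Ss St s_in_t.
have [u su] := S_ne s Ss; have [m Fm] := F_surj u; rewrite -Fm in su.
by apply: (S_disj s t (fmorM F m)) => //; apply: s_in_t.
Qed.

Lemma pullback_partition : is_partition (pullback F S).
Proof.
case: S_part => S_ne [S_cov S_disj]; split; last split.
- move=> P [s [Ss ->]]; have [u su] := S_ne s Ss; have [m Fm] := F_surj u.
  by exists m; rewrite /preimage Fm.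
- move=> m; have [s [Ss sm]] := S_cov (fmorM F m).
  by exists (preimage F s); split=> //; exists s.
- move=> P Q m [s [Ss ->]] [t [Tt ->]] sm tm.
  by rewrite (S_disj s t _ Ss Tt sm tm).
Qed.

Lemma pullback_induced_injective : induced_injective F (pullback F S) S.
Proof.
move=> P1 P2 t [s1 [Ss1 ->]] [s2 [Ss2 ->]] St s1t s2t.
by rewrite (block_of_image Ss1 St s1t) (block_of_image Ss2 St s2t).
Qed.

Lemma block_is_preimage (S' : (Mor C1 -> Prop) -> Prop) :
  is_partition S' -> qs_morphism F S' S -> induced_injective F S' S ->
  forall P s, S' P -> S s -> (forall m, P m -> s (fmorM F m)) ->
  P = preimage F s.
Proof.
case: S_part => _ [_ S_disj] [_ [S'_cov _]] F_mor F_inj P s S'P Ss P_in_s.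
apply: functional_extensionality => m; apply: propositional_extensionality.
split; first exact: P_in_s.
move=> sm; have [P' [S'P' P'm]] := S'_cov m; have [t [St P'_in_t]] := F_mor P' S'P'.
have ets : t = s := S_disj t s _ St Ss (P'_in_t m P'm) sm; subst t.
by rewrite (F_inj P P' s S'P S'P' St P_in_s P'_in_t).
Qed.

Lemma pullback_unique (S' : (Mor C1 -> Prop) -> Prop) :
  is_partition S' -> qs_morphism F S' S -> induced_injective F S' S ->
  S' = pullback F S.
Proof.
move=> S'_part F_mor F_inj; have [S_ne [_ S_disj]] := S_part.
have [_ [S'_cov _]] := S'_part.
apply: functional_extensionality => P; apply: propositional_extensionality; split.
- move=> S'P; have [s [Ss P_in_s]] := F_mor P S'P.
  by exists s; split=> //; exact: (block_is_preimage S'_part F_mor F_inj S'P Ss P_in_s).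
- move=> [s [Ss ->]]; have [u su] := S_ne s Ss; have [m Fm] := F_surj u.
  have [P' [S'P' P'm]] := S'_cov m; have [t [St P'_in_t]] := F_mor P' S'P'.
  have ets : t = s by apply: (S_disj t s u) => //; rewrite -Fm; apply: P'_in_t.
  by subst t; rewrite -(block_is_preimage S'_part F_mor F_inj S'P' Ss P'_in_t).
Qed.

End PullbackAlongSurjection.

Lemma transp0 K O (C : Cat O) (D : NatSys K C) x y (f g : CHom C x y) (e : f = g) :
  transp (fun h => (ns_D D h : Type)) e 0 = 0.
Proof. by case: g / e. Qed.

Lemma gstar0 K O (C : Cat O) (D : NatSys K C) x y z (f : CHom C y z) (g : CHom C x y) :
  gstar D f g 0 = 0.
Proof. by rewrite /gstar linear0 transp0. Qed.

Lemma fstar0 K O (C : Cat O) (D : NatSys K C) x y z (f : CHom C y z) (g : CHom C x y) :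
  fstar D f g 0 = 0.
Proof. by rewrite /fstar linear0 transp0. Qed.

(** [q : E -> C] is surjective on morphisms (it is full and bijective on objects). *)
Lemma le_q_surj K O (C : Cat O) (D : NatSys K C) (L : LinExt D) (u : Mor C) :
  exists m, fmorM (le_functor L) m = u.
Proof. by case: u => x y a; have [ta <-] := le_full L a; exists (mkMor ta). Qed.

Section LinearExtension.

Variables (K : comPzRingType) (O : Type) (C : Cat O) (D : NatSys K C) (L : LinExt D).

Local Notation E := (le_E L).
Local Notation q := (le_q L).
Local Notation QF := (le_functor L).

Lemma comp_act_right x y z (ta : CHom E y z) (bt : CHom E x y) (b : ns_D D (q bt)) :
  ccomp E ta (le_act b bt) = le_act (fstar D (q ta) (q bt) b) (ccomp E ta bt).
Proof.
have := le_comp (f0 := ta) (g0 := bt) 0 b.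
by rewrite (le_act0 (erefl (q ta))) gstar0 addr0.
Qed.

(** The fibre of [q] over [a] is a [D_a]-torsor, hence equinumerous with [D_a]. *)
Lemma fibre_card_torsor x y (a : CHom C x y) :
  card_eq (ns_D D a) {m : Mor E | fmorM QF m = mkMor a}.
Proof.
have [a0 qa0] := le_full L a.
have act_fib (al : ns_D D a) : fmorM QF (mkMor (le_act al a0)) = mkMor a.
  by rewrite /fmorM /= (le_act_fib _ qa0).
apply: (@card_inj_surj _ _ (fun al => exist _ _ (act_fib al))).
- move=> al be /(f_equal (@proj1_sig _ _)) eq_mor; have eq_act := mkMor_inj eq_mor.
  have qbe : q (le_act be a0) = a by apply: le_act_fib.
  have : le_act (al - be) (le_act be a0) = le_act be a0 by rewrite -le_actD // subrK.
  by move/(le_free qbe)/eqP; rewrite subr_eq0 => /eqP.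
- case=> [[x' y' mt] fib]; have qmt : mkMor (q mt) = mkMor a := fib.
  have [ex ey] := mkMor_endpoints qmt; subst x' y'.
  have [al mt_eq] := le_transitive qa0 (mkMor_inj qmt).
  by exists al; apply: sig_inj; rewrite /= mt_eq.
Qed.

Hypothesis fstar_bij :
  forall x y z (f : CHom C y z) (g : CHom C x y), bijective (fstar D f g).

(** [a_* : D_{1_x} -> D_{a 1_x} = D_a] identifies every [D_a] with [D_{1_{s(a)}}]. *)
Lemma ns_card_id x y (a : CHom C x y) : card_eq (ns_D D (cid C x)) (ns_D D a).
Proof.
apply: (card_trans (B := ns_D D (ccomp C a (cid C x)))).
  by exists (fstar D a (cid C x)); apply: fstar_bij.
by rewrite comp_idr; apply: card_refl.
Qed.

Lemma fibre_card (u : Mor C) :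
  card_eq {m : Mor E | fmorM QF m = u} (ns_D D (cid C (msrc u))).
Proof.
case: u => x y a; apply: card_sym.
exact: card_trans (ns_card_id a) (fibre_card_torsor a).
Qed.

Lemma lift_left_cancel x y z (ta : CHom E y z) (bt bt' : CHom E x y) :
  q bt' = q bt -> ccomp E ta bt' = ccomp E ta bt -> bt' = bt.
Proof.
move=> q_eq comp_eq; have [b bt'_eq] := le_transitive (erefl (q bt)) q_eq; subst bt'.
move: comp_eq; rewrite comp_act_right => comp_eq.
have q_comp : q (ccomp E ta bt) = ccomp C (q ta) (q bt) by rewrite le_q_comp.
have /(bij_inj (fstar_bij _ _)) -> : fstar D (q ta) (q bt) b = fstar D (q ta) (q bt) 0.
  by rewrite fstar0; apply: le_free q_comp comp_eq.
by rewrite le_act0.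
Qed.

Lemma lift_right_factor x y z (ta : CHom E y z) (bt0 : CHom E x y) (ft : CHom E x z) :
  q ft = ccomp C (q ta) (q bt0) ->
  exists bt, q bt = q bt0 /\ ccomp E ta bt = ft.
Proof.
move=> q_ft; have [finv _ fK] := fstar_bij (q ta) (q bt0).
have q_comp : q (ccomp E ta bt0) = ccomp C (q ta) (q bt0) by rewrite le_q_comp.
have [g ->] := le_transitive q_comp q_ft.
exists (le_act (finv g) bt0); split; first exact: le_act_fib.
by rewrite comp_act_right fK.
Qed.

Lemma q_fact_comp (p : CompPair E) (F : Mor E) :
  mkMor (ccomp E (cp_a p) (cp_b p)) = F ->
  mkMor (ccomp C (q (cp_a p)) (q (cp_b p))) = fmorM QF F.
Proof. by move=> <-; rewrite /fmorM /= le_q_comp. Qed.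

Definition q_fact (s t : Mor C -> Prop) (F : Mor E)
  (P : fact_set (preimage QF s) (preimage QF t) F) : fact_set s t (fmorM QF F) :=
  let: exist p (conj sa (conj tb comp)) := P in
  exist _ (mkCP (q (cp_a p)) (q (cp_b p))) (conj sa (conj tb (q_fact_comp comp))).

Variables (s t : Mor C -> Prop) (F : Mor E).

Lemma lift_fact_with_fst (b : fact_set s t (fmorM QF F)) (m : Mor E) :
  fmorM QF m = mkMor (cp_a (proj1_sig b)) ->
  exists P : fact_set (preimage QF s) (preimage QF t) F,
    q_fact P = b /\ mkMor (cp_a (proj1_sig P)) = m.
Proof.
case: m => x y ta; case: b => [[x' y' z' a b'] [sa [tb comp]]] /= fib.
have qta : mkMor (q ta) = mkMor a := fib.
have [ex ey] := mkMor_endpoints qta; subst y' z'; have {qta} qta := mkMor_inj qta; subst a.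
case: F comp => [xf yf ft] comp.
have qft : mkMor (ccomp C (q ta) b') = mkMor (q ft) := comp.
have [ex ey] := mkMor_endpoints qft; subst xf yf; have {}qft := mkMor_inj qft.
have [bt0 qbt0] := le_full L b'; subst b'.
have [bt [qbt comp_bt]] := lift_right_factor (esym qft).
have tbt : preimage QF t (mkMor bt) by rewrite /preimage /fmorM /= qbt.
have comp_t : mkMor (ccomp E (cp_a (mkCP ta bt)) (cp_b (mkCP ta bt))) = mkMor ft
  by rewrite /= comp_bt.
exists (exist _ (mkCP ta bt) (conj sa (conj tbt comp_t))); split=> //.
by apply: sig_inj => /=; rewrite qbt.
Qed.

Variable b : fact_set s t (fmorM QF F).

Lemma q_fact_fst (P : fact_set (preimage QF s) (preimage QF t) F) :
  q_fact P = b -> fmorM QF (mkMor (cp_a (proj1_sig P))) = mkMor (cp_a (proj1_sig b)).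
Proof. by move=> <-; case: P => [p [? [? ?]]]. Qed.

Definition fibre_fst (P : {P | q_fact P = b}) :
  {m : Mor E | fmorM QF m = mkMor (cp_a (proj1_sig b))} :=
  exist _ _ (q_fact_fst (proj2_sig P)).

(** A lifted factorization over [b] is determined by its first factor,
    since left composition with a lift is injective on fibres of [q]. *)
Lemma fibre_fst_inj : injective fibre_fst.
Proof.
case=> [[[x1 y1 z1 a1 b1] [s1 [t1 c1]]] e1] [[[x2 y2 z2 a2 b2] [s2 [t2 c2]]] e2].
move/(f_equal (@proj1_sig _ _)) => /= eq_a.
have [ey ez] := mkMor_endpoints eq_a; subst y2 z2; have {eq_a} eq_a := mkMor_inj eq_a.
subst a2.
have eq_c : mkMor (ccomp E a1 b1) = mkMor (ccomp E a1 b2) by rewrite c1 c2.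
have [ex _] := mkMor_endpoints eq_c; subst x2; have {}eq_c := mkMor_inj eq_c.
have eq_qb : mkMor (q b2) = mkMor (q b1).
  by have /= -> := f_equal (fun P => mkMor (cp_b (proj1_sig P))) (etrans e1 (esym e2)).
have eq_b := lift_left_cancel (mkMor_inj eq_qb) (esym eq_c); subst b2.
by apply: sig_inj; apply: sig_inj.
Qed.

(** Every lift of the first factor of [b] extends to a lifted factorization over
    [b], since lifts of a composite factor through any lift of the left factor. *)
Lemma fibre_fst_surj m : exists P, fibre_fst P = m.
Proof.
case: m => [m fib]; have [P [qP fstP]] := lift_fact_with_fst fib.
by exists (exist _ P qP); apply: sig_inj.
Qed.

Lemma q_fact_fibre_card :
  card_eq {P | q_fact P = b} (ns_D D (cid C (cp_y (proj1_sig b)))).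
Proof.
apply: card_trans (fibre_card (mkMor (cp_a (proj1_sig b)))).
exact: card_inj_surj fibre_fst_inj fibre_fst_surj.
Qed.

End LinearExtension.

(** Counting factorizations in [E]: the lifted factorizations of [F] are the
    disjoint union, over the factorizations [(a, b)] of [q F] in [C], of copies
    of [D_{1_{s(a)}}].  If these modules have equal size along the block [s],
    equal counts downstairs give equal counts upstairs. *)
Lemma lifted_fact_card K O (C : Cat O) (D : NatSys K C) (L : LinExt D)
  (s t : Mor C -> Prop) (F G : Mor (le_E L)) :
  (forall x y z (f : CHom C y z) (g : CHom C x y), bijective (fstar D f g)) ->
  (forall u v, s u -> s v -> card_eq (ns_D D (cid C (msrc u))) (ns_D D (cid C (msrc v)))) ->
  card_eq (fact_set s t (fmorM (le_functor L) F)) (fact_set s t (fmorM (le_functor L) G)) ->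
  card_eq (fact_set (preimage (le_functor L) s) (preimage (le_functor L) t) F)
          (fact_set (preimage (le_functor L) s) (preimage (le_functor L) t) G).
Proof.
move=> fstar_bij s_card [h h_bij]; apply: (card_fibres (h := h)) => // b.
apply: card_trans (q_fact_fibre_card fstar_bij b) _.
apply: card_trans (card_sym (q_fact_fibre_card fstar_bij (h b))).
exact: s_card (proj1 (proj2_sig b)) (proj1 (proj2_sig (h b))).
Qed.

Lemma pullback_quasi_schemoid K O (C : Cat O) (D : NatSys K C) (L : LinExt D)
  (S : (Mor C -> Prop) -> Prop) :
  quasi_schemoid S ->
  (forall x y z (f : CHom C y z) (g : CHom C x y), bijective (fstar D f g)) ->
  (forall s u v, S s -> s u -> s v ->
      card_eq (ns_D D (cid C (msrc u))) (ns_D D (cid C (msrc v)))) ->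
  quasi_schemoid (pullback (le_functor L) S).
Proof.
move=> [S_part S_count] fstar_bij S_card; split.
  exact: (pullback_partition (le_q_surj L) S_part).
move=> P Q M F G [s [Ss ->]] [t [Tt ->]] [mu [Mm ->]] muF muG.
apply: lifted_fact_card => // [u v|]; first exact: S_card.
exact: S_count Ss Tt Mm muF muG.
Qed.

Theorem proposition5p2 (K : comPzRingType) (O : Type) (C : Cat O) (D : NatSys K C)
  (L : LinExt D) (S : (Mor C -> Prop) -> Prop) :
  quasi_schemoid S ->
  (forall x y z (f : CHom C y z) (g : CHom C x y),
      bijective (fstar D f g) /\ bijective (gstar D f g)) ->
  (forall (s : Mor C -> Prop) (f g : Mor C), S s -> s f -> s g ->
      exists phi : {linear ns_D D (cid C (msrc f)) -> ns_D D (cid C (msrc g))},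
        bijective phi) ->
  let St := fun P : Mor (le_E L) -> Prop =>
      exists s, S s /\ P = (fun m => s (fmorM (le_functor L) m)) in
  quasi_schemoid St /\
  qs_morphism (le_functor L) St S /\
  induced_injective (le_functor L) St S /\
  (forall S' : (Mor (le_E L) -> Prop) -> Prop,
      quasi_schemoid S' -> qs_morphism (le_functor L) S' S ->
      induced_injective (le_functor L) S' S -> S' = St).
Proof.
move=> S_qs star_bij S_iso St; rewrite -[St]/(pullback (le_functor L) S).
have fstar_bij x y z (f : CHom C y z) (g : CHom C x y) : bijective (fstar D f g)
  by case: (star_bij x y z f g).
have S_card s u v : S s -> s u -> s v ->
    card_eq (ns_D D (cid C (msrc u))) (ns_D D (cid C (msrc v))).
  by move=> Ss su sv; have [phi phi_bij] := S_iso s u v Ss su sv; exists phi.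
have [S_part _] := S_qs.
split; first exact: pullback_quasi_schemoid.
split; first exact: pullback_qs_morphism.
split; first exact: (pullback_induced_injective (le_q_surj L) S_part).
move=> S' [S'_part _] q_mor q_inj.
exact: (pullback_unique (le_q_surj L) S_part S'_part q_mor q_inj).
Qed.
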